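(* Let $k\ge 2$ and $\ell\ge 2$ be integers. Then $\overline{\alpha}(\{1,k,2k,\dots,\ell k\})=\frac{1}{\ell+1}$.
   Context: For a finite set $S$ of positive integers, the distance graph $G(S)$ has vertex set $\mathbb{Z}$, with $i,j$ adjacent iff $|i-j|\in S$. The density of $A\subseteq\mathbb{Z}$ is $\delta(A)=\limsup_{N\to\infty}\frac{|A\cap[-N,N]|}{2N+1}$, and the independence ratio $\overline{\alpha}(S)$ is the supremum of $\delta(A)$ over independent sets $A$ of $G(S)$. *)

From Stdlib Require Import Reals ZArith List Classical ClassicalEpsilon.
From Coquelicot Require Import Coquelicot.
Open Scope R_scope.

(* Distance graph G(S) on Z: i ~ j iff |i - j| \in S (S a finite list of
   positive integers).  A set A of integers is independent iff no two of its
   elements are adjacent. *)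
Definition independent (S : list Z) (A : Z -> Prop) : Prop :=
  forall i j : Z, A i -> A j -> ~ In (Z.abs (i - j)) S.

(* |A \cap [-N, N]|, computed with a classical indicator. *)
Definition ind (A : Z -> Prop) (z : Z) : nat :=
  if excluded_middle_informative (A z) then 1%nat else 0%nat.

Definition count_window (A : Z -> Prop) (N : nat) : nat :=
  fold_right Nat.add 0%nat
    (map (fun i : nat => ind A (Z.of_nat i - Z.of_nat N)%Z) (seq 0 (2 * N + 1))).

Definition density (A : Z -> Prop) : Rbar :=
  LimSup_seq (fun N : nat => INR (count_window A N) / INR (2 * N + 1)).

Definition indep_ratio (S : list Z) : Rbar :=
  Lub_Rbar (fun x : R => exists A : Z -> Prop, independent S A /\ density A = Finite x).

Definition dist_set (k l : nat) : list Z :=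
  1%Z :: map (fun i : nat => (Z.of_nat k * Z.of_nat i)%Z) (seq 1 l).

From Pilot Require Import Defs.
From Stdlib Require Import Reals ZArith List Lia Lra Classical ClassicalEpsilon.
From Coquelicot Require Import Coquelicot.
Open Scope R_scope.

(* An independent set meets each progression x, x + k, ..., x + l k in at most
   one point, since all differences j k (1 <= j <= l) are forbidden.  Averaging
   over the l + 1 translates of a window by multiples of k, a window of length M
   contains at most M / (l + 1) + O((l + 1) k) points of such a set, so its
   density is at most 1 / (l + 1).  Conversely, the set of x = q k + r
   (0 <= r < k) with q = r mod 2 modulo l + 1 meets every such progression
   (along it r is fixed and q runs through all residues), so it has density
   1 / (l + 1).  It avoids the differences j k because these change q by j and
   keep r, and the difference 1 because it either flips the parity of r or,
   when r = k - 1, moves q from a residue in {0, 1} to one in {1, 2}. *)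

(* Coquelicot also exports a constant [ind]. *)
Notation ind := Pilot.Defs.ind.

Fixpoint nsum (f : nat -> nat) (n : nat) : nat :=
  match n with O => O | S n => (nsum f n + f n)%nat end.

Lemma nsum_ext (f g : nat -> nat) (n : nat) :
  (forall i, (i < n)%nat -> f i = g i) -> nsum f n = nsum g n.
Proof. induction n as [|n IH]; simpl; intros H; auto. rewrite IH, H; auto. Qed.

Lemma nsum_le (f g : nat -> nat) (n : nat) :
  (forall i, (i < n)%nat -> (f i <= g i)%nat) -> (nsum f n <= nsum g n)%nat.
Proof.
  induction n as [|n IH]; simpl; intros H; auto.
  specialize (IH (fun i Hi => H i ltac:(lia))). specialize (H n ltac:(lia)). lia.
Qed.

Lemma nsum_const (c n : nat) : nsum (fun _ => c) n = (n * c)%nat.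
Proof. induction n as [|n IH]; simpl; auto. rewrite IH; lia. Qed.

Lemma nsum_add (f g : nat -> nat) (n : nat) :
  nsum (fun i => f i + g i)%nat n = (nsum f n + nsum g n)%nat.
Proof. induction n as [|n IH]; simpl; auto. rewrite IH; lia. Qed.

Lemma nsum_split (f : nat -> nat) (m n : nat) :
  nsum f (m + n) = (nsum f m + nsum (fun i => f (m + i)%nat) n)%nat.
Proof.
  induction n as [|n IH]; [rewrite Nat.add_0_r; simpl; lia|].
  rewrite Nat.add_succ_r; simpl. rewrite IH. lia.
Qed.

Lemma nsum_swap (F : nat -> nat -> nat) (m n : nat) :
  nsum (fun j => nsum (fun i => F i j) m) n = nsum (fun i => nsum (fun j => F i j) n) m.
Proof.
  induction n as [|n IH]; simpl.
  - induction m as [|m IHm]; simpl; lia.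
  - rewrite IH, <- nsum_add. reflexivity.
Qed.

Lemma term_le_nsum (f : nat -> nat) (n j : nat) : (j < n)%nat -> (f j <= nsum f n)%nat.
Proof.
  induction n as [|n IH]; simpl; intros Hj; [lia|].
  destruct (Nat.eq_dec j n) as [->|]; [lia|]. specialize (IH ltac:(lia)). lia.
Qed.

Lemma ind_le1 (A : Z -> Prop) (z : Z) : (ind A z <= 1)%nat.
Proof. unfold ind; destruct excluded_middle_informative; lia. Qed.

Lemma ind_true (A : Z -> Prop) (z : Z) : A z -> ind A z = 1%nat.
Proof. unfold ind; destruct excluded_middle_informative; tauto. Qed.

Lemma ind_false (A : Z -> Prop) (z : Z) : ~ A z -> ind A z = 0%nat.
Proof. unfold ind; destruct excluded_middle_informative; tauto. Qed.

Definition count_from (A : Z -> Prop) (a : Z) (n : nat) : nat :=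
  nsum (fun i => ind A (a + Z.of_nat i)%Z) n.

Definition ap_count (A : Z -> Prop) (x : Z) (k n : nat) : nat :=
  nsum (fun j => ind A (x + Z.of_nat (j * k))%Z) n.

Lemma count_from_le (A : Z -> Prop) (a : Z) (n : nat) : (count_from A a n <= n)%nat.
Proof.
  unfold count_from. rewrite <- (Nat.mul_1_r n) at 2. rewrite <- nsum_const.
  apply nsum_le; intros; apply ind_le1.
Qed.

Lemma count_from_split (A : Z -> Prop) (a : Z) (m n : nat) :
  count_from A a (m + n) = (count_from A a m + count_from A (a + Z.of_nat m)%Z n)%nat.
Proof.
  unfold count_from. rewrite nsum_split. f_equal.
  apply nsum_ext; intros. f_equal. lia.
Qed.

Lemma count_from_shift (A : Z -> Prop) (a : Z) (n d : nat) :
  (count_from A a n <= count_from A (a + Z.of_nat d)%Z n + d)%nat /\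
  (count_from A (a + Z.of_nat d)%Z n <= count_from A a n + d)%nat.
Proof.
  pose proof (count_from_split A a n d) as Hnd.
  pose proof (count_from_split A a d n) as Hdn. rewrite Nat.add_comm in Hdn.
  pose proof (count_from_le A a d). pose proof (count_from_le A (a + Z.of_nat n)%Z d).
  lia.
Qed.

(* Double counting: the windows [a + j k, a + j k + M), j < L, together cover
   each progression a + i, a + i + k, ..., a + i + (L - 1) k (i < M) once. *)
Lemma nsum_count_from_ap (A : Z -> Prop) (a : Z) (k M L : nat) :
  nsum (fun j => count_from A (a + Z.of_nat (j * k))%Z M) L =
  nsum (fun i => ap_count A (a + Z.of_nat i)%Z k L) M.
Proof.
  unfold count_from, ap_count. rewrite nsum_swap.
  apply nsum_ext; intros. apply nsum_ext; intros. f_equal. lia.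
Qed.

Section APDensity.

Variables (A : Z -> Prop) (k L c : nat).

Lemma count_from_le_of_ap_count_le :
  (forall x, (ap_count A x k L <= c)%nat) ->
  forall a M, (L * count_from A a M <= c * M + L * (L * k))%nat.
Proof.
  intros Hap a M.
  assert (Hsum : (nsum (fun j => count_from A (a + Z.of_nat (j * k))%Z M) L <= c * M)%nat).
  { rewrite nsum_count_from_ap, Nat.mul_comm, <- nsum_const.
    apply nsum_le; intros; apply Hap. }
  assert (Hshift : (nsum (fun _ => count_from A a M) L <=
      nsum (fun j => count_from A (a + Z.of_nat (j * k))%Z M + L * k) L)%nat).
  { apply nsum_le; intros j Hj.
    pose proof (count_from_shift A a M (j * k)). nia. }
  rewrite nsum_add, !nsum_const in Hshift. lia.
Qed.

Lemma count_from_ge_of_ap_count_ge :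
  (forall x, (c <= ap_count A x k L)%nat) ->
  forall a M, (c * M <= L * count_from A a M + L * (L * k))%nat.
Proof.
  intros Hap a M.
  assert (Hsum : (c * M <= nsum (fun j => count_from A (a + Z.of_nat (j * k))%Z M) L)%nat).
  { rewrite nsum_count_from_ap, Nat.mul_comm, <- nsum_const.
    apply nsum_le; intros; apply Hap. }
  assert (Hshift : (nsum (fun j => count_from A (a + Z.of_nat (j * k))%Z M) L <=
      nsum (fun _ => count_from A a M + L * k) L)%nat).
  { apply nsum_le; intros j Hj.
    pose proof (count_from_shift A a M (j * k)). nia. }
  rewrite nsum_add, !nsum_const in Hshift. lia.
Qed.

End APDensity.

Lemma count_window_eq (A : Z -> Prop) (N : nat) :
  count_window A N = count_from A (- Z.of_nat N)%Z (2 * N + 1).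
Proof.
  unfold count_window, count_from. generalize (2 * N + 1)%nat as n.
  change (fold_right Nat.add 0%nat ?l) with (list_sum l).
  induction n as [|n IH]; [reflexivity|].
  rewrite seq_S, map_app, list_sum_app. simpl.
  rewrite IH, Nat.add_0_r. do 2 f_equal. lia.
Qed.

Lemma in_dist_set (k l : nat) (d : Z) :
  In d (dist_set k l) <->
  d = 1%Z \/ exists m, (1 <= m <= l)%nat /\ d = (Z.of_nat k * Z.of_nat m)%Z.
Proof.
  unfold dist_set. simpl. rewrite in_map_iff.
  split; intros [H | [m [Hm Hd]]]; auto.
  - right. apply in_seq in Hd. exists m. split; [lia | auto].
  - right. exists m. split; [auto | apply in_seq; lia].
Qed.

Lemma independent_of_translates (S : list Z) (A : Z -> Prop) :
  (forall x d, In d S -> A x -> ~ A (x + d)%Z) -> independent S A.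
Proof.
  intros H i j Ai Aj Hd. destruct (Z.le_gt_cases j i).
  - apply (H j _ Hd Aj). replace (j + Z.abs (i - j))%Z with i by lia. exact Ai.
  - apply (H i _ Hd Ai). replace (i + Z.abs (i - j))%Z with j by lia. exact Aj.
Qed.

Lemma ap_count_le1_of_independent (k l : nat) (A : Z -> Prop) :
  independent (dist_set k l) A ->
  forall x n, (n <= l + 1)%nat -> (ap_count A x k n <= 1)%nat.
Proof.
  intros HA x n. unfold ap_count. induction n as [|n IH]; simpl; intros Hn; [lia|].
  specialize (IH ltac:(lia)).
  destruct (classic (A (x + Z.of_nat (n * k))%Z)) as [Hn_in | Hn_out].
  - rewrite (ind_true _ _ Hn_in).
    enough (nsum (fun j => ind A (x + Z.of_nat (j * k))%Z) n = 0%nat) by lia.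
    rewrite <- (Nat.mul_0_r n), <- nsum_const. apply nsum_ext; intros i Hi.
    apply ind_false. intros Hi_in. apply (HA _ _ Hn_in Hi_in), in_dist_set.
    right. exists (n - i)%nat. split; [lia|]. rewrite !Nat2Z.inj_mul, Nat2Z.inj_sub by lia.
    nia.
  - rewrite (ind_false _ _ Hn_out). lia.
Qed.

Lemma Zmod_add_neq (q m L : Z) : (0 < m < L)%Z -> ((q + m) mod L <> q mod L)%Z.
Proof.
  intros Hm E.
  pose proof (Z.div_mod q L ltac:(lia)). pose proof (Z.div_mod (q + m) L ltac:(lia)).
  assert (L * ((q + m) / L - q / L) = m)%Z by lia.
  destruct (Z.le_gt_cases ((q + m) / L - q / L) 0); nia.
Qed.

Lemma Zdiv_mod_succ (x k : Z) : (0 < k)%Z ->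
  ((x + 1) / k = x / k /\ (x + 1) mod k = x mod k + 1)%Z \/
  ((x + 1) / k = x / k + 1 /\ (x + 1) mod k = 0)%Z.
Proof.
  intros Hk.
  pose proof (Z.div_mod x k ltac:(lia)). pose proof (Z.mod_pos_bound x k Hk).
  destruct (Z.eq_dec (x mod k) (k - 1)); [right | left]; split; symmetry.
  - apply Z.div_unique with 0%Z; lia.
  - apply Z.mod_unique with (x / k + 1)%Z; lia.
  - apply Z.div_unique with (x mod k + 1)%Z; lia.
  - apply Z.mod_unique with (x / k)%Z; lia.
Qed.

Definition extremal_set (k l : nat) (x : Z) : Prop :=
  ((x / Z.of_nat k) mod Z.of_nat (l + 1) = (x mod Z.of_nat k) mod 2)%Z.

Lemma extremal_set_succ (k l : nat) (x : Z) : (1 <= k)%nat -> (2 <= l)%nat ->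
  extremal_set k l x -> ~ extremal_set k l (x + 1)%Z.
Proof.
  unfold extremal_set. intros Hk Hl Hx.
  destruct (Zdiv_mod_succ x (Z.of_nat k) ltac:(lia)) as [[-> ->] | [-> ->]].
  - rewrite Hx. intros E. Z.div_mod_to_equations. lia.
  - (* r = k - 1, so q mod (l + 1) is 0 or 1 and cannot be followed by 0 *)
    pose proof (Z.mod_pos_bound (x mod Z.of_nat k) 2 ltac:(lia)).
    rewrite <- Z.add_mod_idemp_l, Hx, (Z.mod_small _ (Z.of_nat (l + 1))) by lia.
    change (0 mod 2)%Z with 0%Z. lia.
Qed.

Lemma extremal_set_add_mul (k l m : nat) (x : Z) : (1 <= k)%nat -> (1 <= m <= l)%nat ->
  extremal_set k l x -> ~ extremal_set k l (x + Z.of_nat k * Z.of_nat m)%Z.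
Proof.
  unfold extremal_set. intros Hk Hm Hx.
  rewrite (Z.mul_comm (Z.of_nat k)), Z.div_add, Z_mod_plus_full, <- Hx by lia.
  apply Zmod_add_neq. lia.
Qed.

Lemma extremal_set_independent (k l : nat) : (1 <= k)%nat -> (2 <= l)%nat ->
  independent (dist_set k l) (extremal_set k l).
Proof.
  intros Hk Hl. apply independent_of_translates.
  intros x d Hd Hx. apply in_dist_set in Hd as [-> | [m [Hm ->]]].
  - exact (extremal_set_succ k l x Hk Hl Hx).
  - exact (extremal_set_add_mul k l m x Hk Hm Hx).
Qed.

Lemma extremal_set_ap_count (k l : nat) (x : Z) : (1 <= k)%nat -> (1 <= l)%nat ->
  (1 <= ap_count (extremal_set k l) x k (l + 1))%nat.
Proof.
  intros Hk Hl. set (L := Z.of_nat (l + 1)). set (kz := Z.of_nat k).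
  (* the progression step k shifts the quotient by 1, so j = (r mod 2 - q) mod L works *)
  set (j := (((x mod kz) mod 2 - x / kz) mod L)%Z).
  assert (Hj : (0 <= j < L)%Z) by (apply Z.mod_pos_bound; lia).
  eapply Nat.le_trans; [| apply (term_le_nsum _ _ (Z.to_nat j)); lia].
  cbv beta. rewrite ind_true; [lia|]. unfold extremal_set. fold kz L.
  rewrite Nat2Z.inj_mul, Z2Nat.id by lia. fold kz.
  rewrite Z.div_add, Z_mod_plus_full by lia. unfold j.
  rewrite Z.add_mod_idemp_r by lia.
  replace (x / kz + ((x mod kz) mod 2 - x / kz))%Z with ((x mod kz) mod 2)%Z by lia.
  apply Z.mod_small. pose proof (Z.mod_pos_bound (x mod kz) 2 ltac:(lia)). unfold L. lia.
Qed.

Lemma ratio_le_of_mul_le (L M c K : R) : 0 < L -> 0 < M ->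
  L * c <= M + L * K -> c / M <= 1 / L + K / M.
Proof.
  intros HL HM H.
  replace (1 / L + K / M) with ((M + L * K) / (L * M)) by (field; lra).
  replace (c / M) with (L * c / (L * M)) by (field; lra).
  apply Rmult_le_compat_r; [left; apply Rinv_0_lt_compat; nra | exact H].
Qed.

Lemma ratio_ge_of_le_mul (L M c K : R) : 0 < L -> 0 < M ->
  M <= L * c + L * K -> 1 / L - K / M <= c / M.
Proof.
  intros HL HM H.
  replace (1 / L - K / M) with ((M - L * K) / (L * M)) by (field; lra).
  replace (c / M) with (L * c / (L * M)) by (field; lra).
  apply Rmult_le_compat_r; [left; apply Rinv_0_lt_compat; nra | lra].
Qed.

Definition window_ratio (A : Z -> Prop) (N : nat) : R :=
  INR (count_window A N) / INR (2 * N + 1).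

Lemma window_ratio_le_of_independent (k l : nat) (A : Z -> Prop) :
  independent (dist_set k l) A -> forall N,
  window_ratio A N <= 1 / INR (l + 1) + INR ((l + 1) * k) / INR (2 * N + 1).
Proof.
  intros HA N. unfold window_ratio. rewrite count_window_eq.
  apply ratio_le_of_mul_le; [apply lt_0_INR; lia | apply lt_0_INR; lia |].
  rewrite <- !mult_INR, <- plus_INR. apply le_INR.
  rewrite <- (Nat.mul_1_l (2 * N + 1)) at 2.
  apply count_from_le_of_ap_count_le.
  intros x. exact (ap_count_le1_of_independent k l A HA x (l + 1) (le_n _)).
Qed.

Lemma window_ratio_extremal_set_ge (k l : nat) : (1 <= k)%nat -> (1 <= l)%nat -> forall N,
  1 / INR (l + 1) - INR ((l + 1) * k) / INR (2 * N + 1) <= window_ratio (extremal_set k l) N.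
Proof.
  intros Hk Hl N. unfold window_ratio. rewrite count_window_eq.
  apply ratio_ge_of_le_mul; [apply lt_0_INR; lia | apply lt_0_INR; lia |].
  rewrite <- !mult_INR, <- plus_INR. apply le_INR.
  rewrite <- (Nat.mul_1_l (2 * N + 1)) at 1.
  apply count_from_ge_of_ap_count_ge.
  intros x. exact (extremal_set_ap_count k l x Hk Hl).
Qed.

Lemma is_lim_seq_div_odd (K : R) : is_lim_seq (fun N => K / INR (2 * N + 1)) 0.
Proof.
  assert (Hinf : is_lim_seq (fun N => INR (2 * N + 1)) p_infty).
  { apply (is_lim_seq_le_p_loc INR); [| exact is_lim_seq_INR].
    exists O. intros N _. apply le_INR. lia. }
  replace (Finite 0) with (Rbar_mult K (Rbar_inv p_infty)) by (simpl; f_equal; ring).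
  apply is_lim_seq_scal_l, is_lim_seq_inv; [exact Hinf | discriminate].
Qed.

Lemma LimSup_seq_le_of_le_add (u v : nat -> R) (c : R) :
  (forall N, u N <= c + v N) -> is_lim_seq v 0 -> Rbar_le (LimSup_seq u) c.
Proof.
  intros Huv Hv.
  replace (Finite c) with (LimSup_seq (fun N => c + v N)).
  - apply LimSup_le. exists O. intros N _. apply Huv.
  - apply is_LimSup_seq_unique, is_lim_LimSup_seq.
    replace (Finite c) with (Finite (c + 0)) by (f_equal; ring).
    apply is_lim_seq_plus'; [apply is_lim_seq_const | exact Hv].
Qed.

Lemma LimSup_seq_squeeze (u v : nat -> R) (c : R) :
  (forall N, c - v N <= u N <= c + v N) -> is_lim_seq v 0 -> LimSup_seq u = c.
Proof.
  intros Huv Hv. apply is_LimSup_seq_unique, is_lim_LimSup_seq.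
  apply (is_lim_seq_le_le (fun N => c - v N) u (fun N => c + v N)); [exact Huv | |].
  - replace (Finite c) with (Finite (c - 0)) by (f_equal; ring).
    apply is_lim_seq_minus'; [apply is_lim_seq_const | exact Hv].
  - replace (Finite c) with (Finite (c + 0)) by (f_equal; ring).
    apply is_lim_seq_plus'; [apply is_lim_seq_const | exact Hv].
Qed.

Lemma density_le_of_independent (k l : nat) (A : Z -> Prop) :
  independent (dist_set k l) A -> Rbar_le (density A) (1 / INR (l + 1)).
Proof.
  intros HA. apply (LimSup_seq_le_of_le_add _ _ _ (window_ratio_le_of_independent k l A HA)).
  apply is_lim_seq_div_odd.
Qed.

Lemma density_extremal_set (k l : nat) : (1 <= k)%nat -> (2 <= l)%nat ->
  density (extremal_set k l) = 1 / INR (l + 1).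
Proof.
  intros Hk Hl. apply (LimSup_seq_squeeze _ (fun N => INR ((l + 1) * k) / INR (2 * N + 1))).
  - intros N. split.
    + apply (window_ratio_extremal_set_ge k l Hk ltac:(lia)).
    + apply (window_ratio_le_of_independent k l), extremal_set_independent; assumption.
  - apply is_lim_seq_div_odd.
Qed.

Theorem corollary20 (k l : nat) (hk : (2 <= k)%nat) (hl : (2 <= l)%nat) :
  indep_ratio (dist_set k l) = Finite (1 / INR (l + 1)).
Proof.
  apply is_lub_Rbar_unique. split.
  - intros x [A [HA Hx]]. rewrite <- Hx. exact (density_le_of_independent k l A HA).
  - intros b Hb. apply Hb. exists (extremal_set k l). split.
    + apply extremal_set_independent; lia.
    + apply density_extremal_set; lia.
Qed.
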